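(* Let $G$ be a finitely generated group and let $R_1<R_2<\cdots$ be an ascending sequence of limit groups over free products that are quotients of $G$. Then there exists a limit group over free products $R$, a quotient of $G$, such that $R>R_m$ for every $m$.
   Context: Elliptic element of $A*B$: one lying in a conjugate of $A$ or $B$. A limit quotient over free products $(L,\eta)$ of $G$, $L=G/K$ with elliptic set $E_L$, arises from a convergent sequence $h_n:G\to A_n*B_n$ (for each $g$, eventually $h_n(g)=1$ or eventually $\ne1$, and eventually elliptic or eventually non-elliptic; $K$ = elements eventually mapped to 1; $E_L$ = images of elements eventually mapped to elliptics). Partial order: $(L_1,\eta_1)>(L_2,\eta_2)$ if there is an epimorphism $\tau:L_1\to L_2$ with $\eta_2=\tau\circ\eta_1$, $\tau(E_{L_1})\subset E_{L_2}$, and either $\ker\tau\ne1$ or $\tau$ is an isomorphism with $\tau(E_{L_1})\subsetneq E_{L_2}$. *)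

From Stdlib Require Import Arith.


Record Group := {
  carrier :> Type;
  gmul : carrier -> carrier -> carrier;
  gone : carrier;
  ginv : carrier -> carrier;
  gmulA : forall x y z, gmul x (gmul y z) = gmul (gmul x y) z;
  gmul1l : forall x, gmul gone x = x;
  gmulVl : forall x, gmul (ginv x) x = gone
}.

Arguments gmul {g}.
Arguments gone {g}.
Arguments ginv {g}.

Definition is_hom (A B : Group) (f : A -> B) : Prop :=
  forall x y, f (gmul x y) = gmul (f x) (f y).

Arguments is_hom {A B} f.

Definition surjective (A B : Type) (f : A -> B) : Prop := forall y, exists x, f x = y.
Definition injective (A B : Type) (f : A -> B) : Prop := forall x y, f x = f y -> x = y.

Inductive generated (G : Group) (S : list (carrier G)) : carrier G -> Prop :=
  | gen_one : generated G S gone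
  | gen_elt : forall s, List.In s S -> generated G S s
  | gen_inv : forall x, generated G S x -> generated G S (ginv x)
  | gen_mul : forall x y, generated G S x -> generated G S y -> generated G S (gmul x y).

Arguments surjective {A B} f.
Arguments injective {A B} f.

Definition finitely_generated (G : Group) : Prop :=
  exists S : list G, forall g : G, generated G S g.

Definition is_free_product (A B F : Group) (iA : A -> F) (iB : B -> F) : Prop :=
  is_hom iA /\ is_hom iB /\
  forall (H : Group) (f : A -> H) (g : B -> H), is_hom f -> is_hom g ->
    exists phi : F -> H, is_hom phi /\
      (forall a, phi (iA a) = f a) /\ (forall b, phi (iB b) = g b) /\
      (forall psi : F -> H, is_hom psi ->
         (forall a, psi (iA a) = f a) -> (forall b, psi (iB b) = g b) ->
         forall x, psi x = phi x).

Arguments is_free_product {A B F} iA iB.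

Record FreeProduct := {
  fpA : Group;
  fpB : Group;
  fpF : Group;
  fp_iA : fpA -> fpF;
  fp_iB : fpB -> fpF;
  fp_ok : is_free_product fp_iA fp_iB
}.

Definition elliptic (P : FreeProduct) (x : fpF P) : Prop :=
  (exists (c : fpF P) (a : fpA P), x = gmul (ginv c) (gmul (fp_iA P a) c)) \/
  (exists (c : fpF P) (b : fpB P), x = gmul (ginv c) (gmul (fp_iB P b) c)).

Arguments elliptic {P} x.

Definition eventually (Q : nat -> Prop) : Prop := exists N, forall n, N <= n -> Q n.

Record HomSeq (G : Group) := {
  hs_fp : nat -> FreeProduct;
  hs_h : forall n, G -> fpF (hs_fp n);
  hs_hom : forall n, is_hom (hs_h n)
}.

Arguments hs_fp {G} h n.
Arguments hs_h {G} h n _.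

Definition convergent (G : Group) (s : HomSeq G) : Prop :=
  forall g : G,
    (eventually (fun n => hs_h s n g = gone) \/
     eventually (fun n => hs_h s n g <> gone)) /\
    (eventually (fun n => elliptic (hs_h s n g)) \/
     eventually (fun n => ~ elliptic (hs_h s n g))).

Arguments convergent {G} s.

(** A quotient (L, eta) of G together with a distinguished (elliptic) subset E_L *)
Record Quot (G : Group) := {
  q_L : Group;
  q_eta : G -> q_L;
  q_E : q_L -> Prop
}.

Arguments q_L {G} q.
Arguments q_eta {G} q _.
Arguments q_E {G} q _.

Definition is_limit_quotient (G : Group) (R : Quot G) : Prop :=
  is_hom (q_eta R) /\ surjective (q_eta R) /\
  exists s : HomSeq G, convergent s /\
    (forall g : G, q_eta R g = gone <-> eventually (fun n => hs_h s n g = gone)) /\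
    (forall x : q_L R, q_E R x <->
        exists g : G, q_eta R g = x /\ eventually (fun n => elliptic (hs_h s n g))).

Arguments is_limit_quotient {G} R.

Definition lq_gt (G : Group) (R1 R2 : Quot G) : Prop :=
  exists tau : q_L R1 -> q_L R2,
    is_hom tau /\ surjective tau /\
    (forall g, q_eta R2 g = tau (q_eta R1 g)) /\
    (forall x, q_E R1 x -> q_E R2 (tau x)) /\
    ((exists x, tau x = gone /\ x <> gone) \/
     (injective tau /\ exists y, q_E R2 y /\ ~ (exists x, q_E R1 x /\ tau x = y))).

Arguments lq_gt {G} R1 R2.

(** Let [R_0 < R_1 < ...] be an ascending chain of limit quotients of [G],
    with [eta_m : G -> L_m].  The upper bound is the "inverse limit"
    [R_oo]: the image of [G] under the diagonal map [g |-> (eta_m g)_m] into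
    [prod_m L_m], whose elliptic set consists of the images of the elements
    that are elliptic in every [R_m].

    - Since each [R_m] is a limit quotient, on any finite subset of [G] one
      single homomorphism [h : G -> A * B] already records exactly which
      elements die and which become elliptic in [R_m] ([finite_agreement]).
    - [G] being finitely generated is exhausted by an increasing sequence of
      finite balls [B_m]; choosing for each [m] such an [h_m] agreeing with
      [R_m] on [B_m] yields a diagonal sequence ([diagonal_sequence]).
    - As [R_(m+1) > R_m], being trivial (resp. elliptic) in [R_m] is
      antitone in [m], so along the diagonal sequence these properties
      stabilise to "trivial (resp. elliptic) in every [R_m]"
      ([stabilizing_limit]); thus [R_oo] is a limit quotient.
    - The projection [R_oo -> R_m] either has a kernel, or is injective and
      then misses the extra elliptic elements witnessing [R_(m+1) > R_m]. *)

From Stdlib Require Import ClassicalEpsilon FunctionalExtensionality ProofIrrelevance List Lia.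

Lemma gmulV (A : Group) (x : A) : gmul x (ginv x) = gone.
Proof.
  transitivity (gmul (gmul (ginv (ginv x)) (ginv x)) (gmul x (ginv x))).
  - rewrite gmulVl, gmul1l; reflexivity.
  - rewrite <- gmulA, (gmulA A (ginv x) x (ginv x)), gmulVl, gmul1l, gmulVl.
    reflexivity.
Qed.

Lemma gmul1r (A : Group) (x : A) : gmul x gone = x.
Proof. rewrite <- (gmulVl A x), gmulA, gmulV, gmul1l. reflexivity. Qed.

Lemma inv_unique (A : Group) (a b : A) : gmul a b = gone -> a = ginv b.
Proof.
  intro H. rewrite <- (gmul1r A a), <- (gmulV A b), gmulA, H, gmul1l.
  reflexivity.
Qed.

Lemma eq_of_mulV (A : Group) (x y : A) : gmul x (ginv y) = gone -> x = y.
Proof.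
  intro H. rewrite <- (gmul1r A x), <- (gmulVl A y), gmulA, H, gmul1l.
  reflexivity.
Qed.

Lemma hom_one (A B : Group) (f : A -> B) : is_hom f -> f gone = gone.
Proof.
  intro hf.
  assert (Hidem : f gone = gmul (f gone) (f gone))
    by (rewrite <- hf, gmul1l; reflexivity).
  transitivity (gmul (gmul (ginv (f gone)) (f gone)) (f gone)).
  - rewrite gmulVl, gmul1l; reflexivity.
  - rewrite <- gmulA, <- Hidem, gmulVl; reflexivity.
Qed.

Lemma hom_inv (A B : Group) (f : A -> B) :
  is_hom f -> forall x, f (ginv x) = ginv (f x).
Proof.
  intros hf x. apply inv_unique. rewrite <- hf, gmulVl. apply hom_one; auto.
Qed.

Lemma hom_injective_of_trivial_kernel (A B : Group) (f : A -> B) :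
  is_hom f -> (forall x, f x = gone -> x = gone) -> injective f.
Proof.
  intros hf Hker x y Hxy. apply eq_of_mulV, Hker.
  rewrite hf, hom_inv, Hxy by exact hf. apply gmulV.
Qed.

(** [ball Sg m] contains every product of at most [2^m] generators or
    inverses (with repetitions); it grows with [m]. *)
Fixpoint ball (G : Group) (Sg : list G) (m : nat) : list G :=
  match m with
  | 0 => gone :: Sg
  | S m => ball G Sg m ++ map ginv (ball G Sg m) ++
           flat_map (fun a => map (gmul a) (ball G Sg m)) (ball G Sg m)
  end.

Lemma ball_mono (G : Group) Sg m m' g :
  m <= m' -> In g (ball G Sg m) -> In g (ball G Sg m').
Proof.
  intros Hle Hin; induction Hle; auto. simpl; apply in_or_app; left; auto.
Qed.

Lemma generated_in_ball (G : Group) Sg g :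
  generated G Sg g -> exists m, In g (ball G Sg m).
Proof.
  induction 1 as [| s Hs | x _ [m Hm] | x y _ [a Ha] _ [b Hb]].
  - exists 0; simpl; auto.
  - exists 0; simpl; auto.
  - exists (S m); simpl.
    apply in_or_app; right; apply in_or_app; left; apply in_map; auto.
  - exists (S (max a b)); simpl.
    apply in_or_app; right; apply in_or_app; right.
    apply in_flat_map. exists x; split.
    + apply (ball_mono _ _ a); [lia | auto].
    + apply in_map; apply (ball_mono _ _ b); [lia | auto].
Qed.

Lemma fg_exhaustion (G : Group) :
  finitely_generated G ->
  exists B : nat -> list G,
    (forall m m' g, m <= m' -> In g (B m) -> In g (B m')) /\
    (forall g, exists m, In g (B m)).
Proof.
  intros [Sg HSg]. exists (ball G Sg). split.
  - intros m m' g; apply ball_mono.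
  - intro g; apply generated_in_ball, HSg.
Qed.

Lemma eventually_and (P Q : nat -> Prop) :
  eventually P -> eventually Q -> eventually (fun n => P n /\ Q n).
Proof.
  intros [N1 H1] [N2 H2]. exists (max N1 N2); intros n Hn.
  split; [apply H1 | apply H2]; lia.
Qed.

Lemma eventually_forall_in {T : Type} (Q : T -> nat -> Prop) (l : list T) :
  (forall g, In g l -> eventually (Q g)) ->
  eventually (fun n => forall g, In g l -> Q g n).
Proof.
  induction l as [| a l IH]; intro H.
  - exists 0; intros n _ g [].
  - destruct (eventually_and (Q a) (fun n => forall g, In g l -> Q g n))
      as [N HN].
    + apply H; left; reflexivity.
    + apply IH; intros g Hg; apply H; right; exact Hg.
    + exists N; intros n Hn g [<- | Hg].
      * exact (proj1 (HN n Hn)).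
      * exact (proj2 (HN n Hn) g Hg).
Qed.

Lemma eventually_iff_of_decided (P : Prop) (Q : nat -> Prop) :
  (eventually Q \/ eventually (fun n => ~ Q n)) -> (P <-> eventually Q) ->
  eventually (fun n => Q n <-> P).
Proof.
  intros [HQ | [N HN]] HP.
  - destruct HQ as [N HN].
    assert (HPtrue : P) by (apply HP; exists N; exact HN).
    exists N; intros n Hn; split; intros _; [exact HPtrue | exact (HN n Hn)].
  - exists N; intros n Hn; split; intro H.
    + exfalso; exact (HN n Hn H).
    + apply HP in H as [N' HN']. exfalso; apply (HN (max N N')); [lia |].
      apply HN'; lia.
Qed.

Lemma stabilizing_limit (P Q : nat -> Prop) (i : nat) :
  (forall m, P (S m) -> P m) -> (forall m, i <= m -> (Q m <-> P m)) ->
  (eventually Q <-> forall m, P m) /\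
  (eventually Q \/ eventually (fun m => ~ Q m)).
Proof.
  intros Hanti HQ.
  assert (Hdown : forall m m', m <= m' -> P m' -> P m)
    by (intros m m' Hle; induction Hle; auto).
  split; [split |].
  - intros [N HN] m. apply (Hdown m (max N (max i m))); [lia |].
    apply HQ; [lia |]. apply HN; lia.
  - intro H. exists i; intros; apply HQ; auto.
  - destruct (classic (forall m, P m)) as [H | H].
    + left; exists i; intros; apply HQ; auto.
    + right. apply not_all_ex_not in H as [M HM].
      exists (max i M); intros n Hn HQn. apply HM.
      apply (Hdown M n); [lia |]. apply HQ; [lia | auto].
Qed.

Definition agrees {G : Group} (R : Quot G) {P : FreeProduct} (x : fpF P)
    (g : G) : Prop :=
  (x = gone <-> q_eta R g = gone) /\ (elliptic x <-> q_E R (q_eta R g)).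

(** The elliptic set of a limit quotient is saturated: [eta g] is elliptic
    iff [g] itself is eventually mapped to elliptic elements. *)
Lemma elliptic_image_char (G : Group) (R : Quot G) (s : HomSeq G) :
  is_hom (q_eta R) ->
  (forall g, q_eta R g = gone <-> eventually (fun n => hs_h s n g = gone)) ->
  (forall x, q_E R x <->
     exists g, q_eta R g = x /\ eventually (fun n => elliptic (hs_h s n g))) ->
  forall g, q_E R (q_eta R g) <-> eventually (fun n => elliptic (hs_h s n g)).
Proof.
  intros Hhom HK HE g. rewrite HE. split; [| intro H; exists g; auto].
  intros [g' [Hg' Hell]].
  set (k := gmul (ginv g') g).
  assert (Hk : eventually (fun n => hs_h s n k = gone)).
  { apply HK. unfold k; rewrite Hhom, (hom_inv _ _ _ Hhom), Hg'. apply gmulVl. }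
  assert (Hgk : g = gmul g' k) by (unfold k; rewrite gmulA, gmulV, gmul1l; auto).
  destruct (eventually_and _ _ Hell Hk) as [N HN]. exists N; intros n Hn.
  destruct (HN n Hn) as [Hn1 Hn2].
  rewrite Hgk, (hs_hom G s n), Hn2, gmul1r. exact Hn1.
Qed.

Lemma limit_sequence_agrees (G : Group) (R : Quot G) :
  is_limit_quotient R ->
  exists s : HomSeq G, forall g, eventually (fun n => agrees R (hs_h s n g) g).
Proof.
  intros [Hhom [_ [s [Hconv [HK HE]]]]]. exists s; intro g.
  destruct (Hconv g) as [Hdec1 Hdec2].
  apply eventually_and; apply eventually_iff_of_decided; auto.
  apply elliptic_image_char; auto.
Qed.

Lemma finite_agreement (G : Group) (R : Quot G) (l : list G) :
  is_limit_quotient R ->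
  exists p : {P : FreeProduct & G -> fpF P},
    is_hom (projT2 p) /\ forall g, In g l -> agrees R (projT2 p g) g.
Proof.
  intro HL. destruct (limit_sequence_agrees G R HL) as [s Hs].
  destruct (eventually_forall_in (fun g n => agrees R (hs_h s n g) g) l
              (fun g _ => Hs g)) as [N HN].
  exists (existT _ (hs_fp s N) (hs_h s N)). split.
  - apply (hs_hom G s N).
  - apply HN; auto.
Qed.

Lemma diagonal_sequence (G : Group) (R : nat -> Quot G) :
  finitely_generated G -> (forall m, is_limit_quotient (R m)) ->
  exists s : HomSeq G, forall g, exists i, forall m,
    i <= m -> agrees (R m) (hs_h s m g) g.
Proof.
  intros Hfg HL. destruct (fg_exhaustion G Hfg) as [B [Bmono Bcover]].
  destruct (choice (fun m (p : {P : FreeProduct & G -> fpF P}) =>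
              is_hom (projT2 p) /\ forall g, In g (B m) -> agrees (R m) (projT2 p g) g)
              (fun m => finite_agreement G (R m) (B m) (HL m))) as [f Hf].
  exists (Build_HomSeq G (fun m => projT1 (f m)) (fun m => projT2 (f m))
                       (fun m => proj1 (Hf m))).
  intro g. destruct (Bcover g) as [i Hi]. exists i; intros m Hm.
  apply (Hf m), (Bmono i); assumption.
Qed.

Lemma lq_gt_antitone (G : Group) (R1 R2 : Quot G) (g : G) :
  lq_gt R1 R2 ->
  (q_eta R1 g = gone -> q_eta R2 g = gone) /\
  (q_E R1 (q_eta R1 g) -> q_E R2 (q_eta R2 g)).
Proof.
  intros [tau [Htau [_ [Heta [HtE _]]]]]. rewrite Heta. split.
  - intro H; rewrite H; apply hom_one; exact Htau.
  - apply HtE.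
Qed.

Section DiagonalImage.
Variable G : Group.
Variable L : nat -> Group.
Variable eta : forall m, G -> L m.
Hypothesis eta_hom : forall m, is_hom (eta m).

Definition thread : Type := {x : forall m, L m | exists g, forall m, x m = eta m g}.

Lemma thread_eq (x y : thread) :
  (forall m, proj1_sig x m = proj1_sig y m) -> x = y.
Proof.
  destruct x as [x hx], y as [y hy]; simpl; intro H.
  assert (x = y) by (apply functional_extensionality_dep; exact H). subst.
  f_equal; apply proof_irrelevance.
Qed.

Lemma thread_mul_ok (x y : thread) :
  exists g, forall m, gmul (proj1_sig x m) (proj1_sig y m) = eta m g.
Proof.
  destruct x as [x [g hg]], y as [y [g' hg']]; simpl.
  exists (gmul g g'); intro m; rewrite hg, hg', eta_hom; reflexivity.
Qed.

Lemma thread_one_ok : exists g, forall m, (gone : L m) = eta m g.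
Proof. exists gone; intro m; rewrite hom_one; auto. Qed.

Lemma thread_inv_ok (x : thread) :
  exists g, forall m, ginv (proj1_sig x m) = eta m g.
Proof.
  destruct x as [x [g hg]]; simpl.
  exists (ginv g); intro m; rewrite hg, hom_inv; auto.
Qed.

Definition thread_mul (x y : thread) : thread := exist _ _ (thread_mul_ok x y).
Definition thread_one : thread := exist _ _ thread_one_ok.
Definition thread_inv (x : thread) : thread := exist _ _ (thread_inv_ok x).

Lemma thread_mulA x y z :
  thread_mul x (thread_mul y z) = thread_mul (thread_mul x y) z.
Proof. apply thread_eq; intro; simpl; apply gmulA. Qed.

Lemma thread_mul1l x : thread_mul thread_one x = x.
Proof. apply thread_eq; intro; simpl; apply gmul1l. Qed.

Lemma thread_mulVl x : thread_mul (thread_inv x) x = thread_one.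
Proof. apply thread_eq; intro; simpl; apply gmulVl. Qed.

Definition diag_group : Group :=
  Build_Group thread thread_mul thread_one thread_inv
              thread_mulA thread_mul1l thread_mulVl.

Definition diag_map (g : G) : diag_group :=
  exist _ (fun m => eta m g) (ex_intro _ g (fun m => eq_refl)).

Definition coord (m : nat) (x : diag_group) : L m := proj1_sig x m.

Lemma diag_map_hom : is_hom diag_map.
Proof. intros x y; apply thread_eq; intro m; apply eta_hom. Qed.

Lemma diag_map_surj : surjective diag_map.
Proof. intros [x [g hg]]. exists g. apply thread_eq; intro m; simpl; auto. Qed.

Lemma diag_map_eq_one (g : G) : diag_map g = gone <-> forall m, eta m g = gone.
Proof.
  split; intro H.
  - intro m; exact (f_equal (coord m) H).
  - apply thread_eq; exact H.
Qed.

Lemma coord_hom (m : nat) : is_hom (coord m).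
Proof. intros x y; reflexivity. Qed.

Lemma coord_surj (m : nat) : surjective (eta m) -> surjective (coord m).
Proof. intros Hs y. destruct (Hs y) as [g Hg]. exists (diag_map g); exact Hg. Qed.

End DiagonalImage.

Section UpperBound.
Variable G : Group.
Variable R : nat -> Quot G.
Hypothesis eta_hom : forall m, is_hom (q_eta (R m)).

Definition limit_quot : Quot G :=
  Build_Quot G (diag_group G (fun m => q_L (R m)) (fun m => q_eta (R m)) eta_hom)
    (diag_map G (fun m => q_L (R m)) (fun m => q_eta (R m)) eta_hom)
    (fun x => exists g, diag_map _ _ _ eta_hom g = x /\
                        forall m, q_E (R m) (q_eta (R m) g)).

Hypothesis chain : forall m, lq_gt (R (S m)) (R m).

Lemma limit_quot_is_limit :
  finitely_generated G -> (forall m, is_limit_quotient (R m)) ->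
  is_limit_quotient limit_quot.
Proof.
  intros Hfg HL. destruct (diagonal_sequence G R Hfg HL) as [s Hs].
  assert (Hlim : forall g,
    ((eventually (fun n => hs_h s n g = gone) <-> forall m, q_eta (R m) g = gone) /\
     (eventually (fun n => hs_h s n g = gone) \/
      eventually (fun n => hs_h s n g <> gone))) /\
    ((eventually (fun n => elliptic (hs_h s n g)) <->
        forall m, q_E (R m) (q_eta (R m) g)) /\
     (eventually (fun n => elliptic (hs_h s n g)) \/
      eventually (fun n => ~ elliptic (hs_h s n g))))).
  { intro g. destruct (Hs g) as [i Hi].
    split; apply (stabilizing_limit _ _ i);
      solve [ intro m; apply (lq_gt_antitone G _ _ g (chain m))
            | intros m Hm; apply (Hi m Hm) ]. }
  split; [apply diag_map_hom | split; [apply diag_map_surj |]].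
  exists s. split; [| split].
  - intro g; split; apply Hlim.
  - intro g. refine (iff_trans (diag_map_eq_one _ _ _ eta_hom g) _).
    symmetry; apply Hlim.
  - intro x; simpl. split; intros [g [Hg Hell]]; exists g; split; auto;
      apply Hlim; exact Hell.
Qed.

Lemma limit_quot_gt :
  (forall m, surjective (q_eta (R m))) -> forall m, lq_gt limit_quot (R m).
Proof.
  intros Hsurj m. exists (coord _ _ _ eta_hom m).
  split; [exact (coord_hom G _ _ eta_hom m) |].
  split; [exact (coord_surj G _ _ eta_hom m (Hsurj m)) |].
  split; [reflexivity |].
  split.
  { intros x [g [<- Hell]]; apply Hell. }
  destruct (classic (exists x : q_L limit_quot,
               coord _ _ _ eta_hom m x = gone /\ x <> gone)) as [Hker | Hker];
    [left; exact Hker | right].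
  assert (Hinj : injective (coord _ _ _ eta_hom m)).
  { apply hom_injective_of_trivial_kernel; [exact (coord_hom G _ _ eta_hom m) |].
    intros x Hx; apply NNPP; intro Hne; apply Hker; exists x; auto. }
  split; [exact Hinj |].
  destruct (chain m) as [tau [_ [_ [Heta [_ [[x' [Hx' Hne]] | [_ [y [Hy Hnew]]]]]]]]].
  - (* a kernel of [R_(m+1) -> R_m] yields a kernel of the projection *)
    exfalso. destruct (Hsurj (S m) x') as [g <-]. apply Hker.
    exists (diag_map _ _ _ eta_hom g). split.
    + simpl; unfold coord; simpl. rewrite Heta; exact Hx'.
    + intro E. apply Hne. exact (f_equal (coord _ _ _ eta_hom (S m)) E).
  - (* an elliptic element of [R_m] not coming from [R_(m+1)] *)
    exists y; split; [exact Hy |]. intros [x [[g [<- Hell]] Hxy]].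
    apply Hnew. exists (q_eta (R (S m)) g); split; [apply Hell |].
    rewrite <- Heta; exact Hxy.
Qed.

End UpperBound.

Theorem proposition20 (G : Group) (R : nat -> Quot G) :
  finitely_generated G ->
  (forall m, is_limit_quotient (R m)) ->
  (forall m, lq_gt (R (S m)) (R m)) ->
  exists R0 : Quot G, is_limit_quotient R0 /\ forall m, lq_gt R0 (R m).
Proof.
  intros Hfg HL Hchain.
  assert (Hhom : forall m, is_hom (q_eta (R m))) by (intro m; apply (HL m)).
  assert (Hsurj : forall m, surjective (q_eta (R m))) by (intro m; apply (HL m)).
  exists (limit_quot G R Hhom). split.
  - apply limit_quot_is_limit; assumption.
  - apply limit_quot_gt; assumption.
Qed.
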